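(* Let $X$ be a split geometric complex whose unique $J$-invariant cell $\eta$ has Maslov grading $g$, let $\Delta$ be a non-negative integer with $2\Delta\le\mathrm{width}(X)$, and let $X^d(\Delta)$ be the double of $X$ with parameter $\Delta$ (for any choice of splitting). Then, as graded $\mathbb{F}[U]$-modules, \[ H_*(X^d(\Delta))\cong H_*(X)\oplus\mathcal{T}_g(\Delta), \] where $\mathcal{T}_g(\Delta)=\mathbb{F}[U]/U^\Delta$ graded so that its top element has grading $g$ (zero if $\Delta=0$).
   Context: $\mathbb{F}=\mathbb{Z}/2$, $\deg U=-2$. Homology means homology of the associated $\mathbb{F}[U]$-complexes. Geometric complex: a finite-dimensional chain complex $C_{cell}$ over $\mathbb{F}$ with a distinguished basis of ''cells'', each cell $e$ having an integer dimension $\dim e$ with the differential lowering dimension by one, together with $\mathrm{gr}$ from cells to a coset of $2\mathbb{Z}$ in $\mathbb{Q}$ with $\mathrm{gr}(e')\ge\mathrm{gr}(e)$ whenever $e'$ appears in $\partial e$. Associated $\mathbb{F}[U]$-complex: $C_{cell}\otimes\mathbb{F}[U]$, Maslov grading $M(e)=\mathrm{gr}(e)+\dim e$, $\partial e=\sum_{e'\in\partial e}U^{(\mathrm{gr}(e')-\mathrm{gr}(e))/2}e'$. Width of $e$: $\min\{\mathrm{gr}(e')-\mathrm{gr}(e):e'\in\partial e\}$ ($\infty$ if $\partial e=0$); $\mathrm{width}(X)$ is the minimum over cells. Split: an involution $J$ of $C_{cell}$ permuting cells, commuting with $\partial$, preserving $\dim$ and $\mathrm{gr}$, with exactly one fixed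 cell $\eta$. Doubling: choose a splitting, the span $C$ of one cell from each $J$-orbit of size two, so $C_{cell}=C\oplus JC\oplus\mathbb{F}\eta$. Each $x\in C$ has $\partial x=a+(1+J)b$ or $a+(1+J)b+\eta$ uniquely with $a,b\in C$; $\partial\eta=(1+J)\zeta$, $\zeta\in C$. The skeleton of $X^d(\Delta)$ is $C\oplus\mathbb{F}\omega\oplus JC\oplus\mathbb{F}J\omega\oplus\mathbb{F}\theta$, $J$ swapping $\omega,J\omega$ and fixing $\theta$. Differential: for $x\in C$, $\partial^dx=a+(1+J)b$ if $\partial x=a+(1+J)b$ and $\eta\notin\partial b$; $=a+(1+J)b+\theta$ if $\partial x=a+(1+J)b$ and $\eta\in\partial b$; $=a+(1+J)b+\omega$ if $\partial x=a+(1+J)b+\eta$; $\partial^d\omega=(1+J)\zeta$; $\partial^d\theta=(1+J)\omega$; extended $J$-equivariantly. Cells of $C,JC$ keep $\dim,\mathrm{gr}$; $\omega,J\omega$ have $\dim\eta$ and $\mathrm{gr}(\eta)$; $\theta$ has $\dim\eta+1$ and $\mathrm{gr}(\eta)-2\Delta$. *)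

From HB Require Import structures.
From mathcomp Require Import all_boot all_order all_algebra.
Set Implicit Arguments. Unset Strict Implicit. Unset Printing Implicit Defensive.
Import Order.TTheory GRing.Theory Num.Theory.
Local Open Scope ring_scope.

(* A cell complex over F = Z/2 with distinguished basis of cells:      *)
(* [bd e e'] means that e' appears (with coefficient 1) in del e.      *)
Record geom_cx := GeomCx {
  cell : finType;
  cdim : cell -> int;
  cgr  : cell -> rat;
  bd   : cell -> cell -> bool }.

Definition is_geom (X : geom_cx) : Prop :=
  [/\ (forall e e' : cell X, bd e e' -> cdim e' = cdim e - 1),
      (* del o del = 0 over Z/2 *)
      (forall e e'' : cell X, ~~ odd #|[set e' | bd e e' && bd e' e'']|),
      (exists q0 : rat, forall e : cell X, exists z : int, cgr e = q0 + 2 * z%:~R) &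
      (forall e e' : cell X, bd e e' -> cgr e <= cgr e')].

Definition maslov (X : geom_cx) (e : cell X) : rat := cgr e + (cdim e)%:~R.

(* [w <= width X]: width X is the minimum over cells e of
   min {gr e' - gr e : e' in del e} (infinity if del e = 0); so w <= width X
   iff w <= gr e' - gr e for every e and every e' appearing in del e. *)
Definition le_width (w : rat) (X : geom_cx) : Prop :=
  forall e e' : cell X, bd e e' -> w <= cgr e' - cgr e.

Definition is_split (X : geom_cx) (J : cell X -> cell X) (eta : cell X) : Prop :=
  [/\ (forall e, J (J e) = e),
      (forall e e', bd (J e) (J e') = bd e e'),
      (forall e, cdim (J e) = cdim e),
      (forall e, cgr (J e) = cgr e) &
      (forall e, (J e == e) = (e == eta))].

(* A splitting: inC is the set of chosen cells, exactly one from each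
   J-orbit of size two (the orbits of size two are {e, J e}, e <> eta). *)
Definition is_splitting (X : geom_cx) (J : cell X -> cell X) (eta : cell X)
    (inC : pred (cell X)) : Prop :=
  (forall e, inC e -> e != eta) /\
  (forall e, e != eta -> inC (J e) = ~~ inC e).

(* Cells: the cells of X other than eta (= C + JC), plus omega         *)
(* (inr (inl false)), J omega (inr (inl true)) and theta (inr (inr tt)).*)
Section Double.
Variables (X : geom_cx) (J : cell X -> cell X) (eta : cell X)
          (inC : pred (cell X)) (Delta : nat).

Definition dcell : finType := ({c : cell X | c != eta} + (bool + unit))%type.

Definition rcell := (cell X + (bool + unit))%type.
Definition raw (t : dcell) : rcell :=
  match t with inl y => inl (val y) | inr o => inr o end.
Definition rJ (t : rcell) : rcell :=
  match t with
  | inl y => inl (J y)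
  | inr (inl b) => inr (inl (~~ b))
  | inr (inr u) => inr (inr u)
  end.

(* For x in C: del x = a + (1+J) b (+ eta), a, b in C.  The coefficient
   of y in C in del x is a_y + b_y, that of J y is b_y. *)
Definition db (x : cell X) : pred (cell X) := fun y => inC y && bd x (J y).
Definition da (x : cell X) : pred (cell X) :=
  fun y => inC y && (bd x y (+) bd x (J y)).
(* coefficient of eta in del b *)
Definition eta_in_db (x : cell X) : bool := odd #|[set y | db x y && bd y eta]|.
(* coefficient of the old cell y (y <> eta) in a + (1+J) b *)
Definition ab_coef (x y : cell X) : bool :=
  if inC y then da x y (+) db x y else db x (J y).

(* del^d x for x in C, as coefficient function on raw cells *)
Definition dbdC (x : cell X) (t : rcell) : bool :=
  match t with
  | inl y => ab_coef x y
  | inr (inl false) => bd x eta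
  | inr (inl true) => false
  | inr (inr _) => ~~ bd x eta && eta_in_db x
  end.

(* del eta = (1+J) zeta, zeta in C *)
Definition zeta : pred (cell X) := fun y => inC y && bd eta y.
(* del^d omega = (1+J) zeta *)
Definition dbdOm (t : rcell) : bool :=
  match t with
  | inl y => if inC y then zeta y else zeta (J y)
  | inr _ => false
  end.
Definition dbdTh (t : rcell) : bool :=
  match t with inr (inl _) => true | _ => false end.

(* extended J-equivariantly: coef of t in del^d(J s) = coef of J t in del^d s *)
Definition dbd (s t : dcell) : bool :=
  match s with
  | inl x => if inC (val x) then dbdC (val x) (raw t)
             else dbdC (J (val x)) (rJ (raw t))
  | inr (inl false) => dbdOm (raw t)
  | inr (inl true) => dbdOm (rJ (raw t))
  | inr (inr _) => dbdTh (raw t)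
  end.

Definition ddim (s : dcell) : int :=
  match s with
  | inl x => cdim (val x)
  | inr (inl _) => cdim eta
  | inr (inr _) => cdim eta + 1
  end.

Definition dgr (s : dcell) : rat :=
  match s with
  | inl x => cgr (val x)
  | inr (inl _) => cgr eta
  | inr (inr _) => cgr eta - 2 * Delta%:R
  end.

Definition dbl_cx : geom_cx := @GeomCx dcell ddim dgr dbd.

End Double.

(* Graded F[U]-modules (deg U = -2, gradings in Q), presented in each  *)
(* grading m as a subquotient Z_m / B_m of F^(amb m) (row spaces),     *)
(* with U : F^(amb m) -> F^(amb (m-2)) inducing the U-action.          *)
Notation F := 'F_2.

Record gmod := GMod {
  amb : rat -> nat;
  gZ  : forall m, 'M[F]_(amb m);
  gB  : forall m, 'M[F]_(amb m);
  gU  : forall m, 'M[F]_(amb m, amb (m - 2)) }.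

(* Isomorphism of graded F[U]-modules between the subquotients:
   a family of linear maps f_m inducing, in every grading m, a well-defined
   bijection Z_m/B_m -> Z'_m/B'_m which commutes with U. *)
Definition gmod_iso (M N : gmod) : Prop :=
  exists f : forall m, 'M[F]_(amb M m, amb N m),
  forall m,
  [/\ (gZ M m *m f m <= gZ N m)%MS,
      (gB M m *m f m <= gB N m)%MS,
      (forall v : 'rV[F]_(amb M m),
          (v <= gZ M m)%MS -> (v *m f m <= gB N m)%MS -> (v <= gB M m)%MS),
      (gZ N m <= gZ M m *m f m + gB N m)%MS &
      (forall v : 'rV[F]_(amb M m), (v <= gZ M m)%MS ->
          (v *m gU M m *m f (m - 2) - v *m f m *m gU N m <= gB N (m - 2))%MS)].

Definition gsum (M N : gmod) : gmod :=
  @GMod (fun m => amb M m + amb N m)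
    (fun m => block_mx (gZ M m) 0 0 (gZ N m))
    (fun m => block_mx (gB M m) 0 0 (gB N m))
    (fun m => block_mx (gU M m) 0 0 (gU N m)).

(* T_g(Delta) = F[U]/U^Delta, top element 1 in grading g: it has one
   generator U^k in grading g - 2k for k < Delta, and U maps U^k to U^(k+1)
   (U^Delta = 0). Zero module if Delta = 0. *)
Definition Tmod (g : rat) (Delta : nat) : gmod :=
  @GMod (fun m => nat_of_bool [exists k : 'I_Delta, m == g - 2 * k%:R])
    (fun m => 1%:M) (fun m => 0) (fun m => const_mx 1).

(* Homology of the associated F[U]-complex C_cell (x) F[U].            *)
(* In Maslov grading m the complex has F-basis the U^k e with k >= 0,  *)
(* M(e) - 2k = m; we identify U^((M e - m)/2) e with the coordinate    *)
(* vector of the cell e in F^cells.  Under this identification         *)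
(*  del (U^k e) = sum_{e' in del e} U^(k + (gr e' - gr e)/2) e'        *)
(* is the cell boundary matrix D, and U is the identity on coordinates. *)
Section Homology.
Variable X : geom_cx.

Definition cbasis (m : rat) (e : cell X) : bool :=
  ((maslov e - m) / 2) \is a Num.nat.

(* projector onto the grading-m chain group C_m *)
Definition Cm (m : rat) : 'M[F]_#|cell X| :=
  diag_mx (\row_i (cbasis m (enum_val i))%:R).

(* boundary matrix acting on row vectors *)
Definition Dmx : 'M[F]_#|cell X| :=
  \matrix_(i, j) (bd (enum_val i) (enum_val j))%:R.

Definition HF : gmod :=
  @GMod (fun _ => #|cell X|)
    (fun m => (Cm m :&: kermx Dmx)%MS)
    (fun m => Cm (m + 1) *m Dmx)
    (fun m => 1%:M).
End Homology.

(* The map collapse : X^d -> X, which sends omega and J omega to eta, kills theta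
   and fixes the other cells, is a grading-preserving chain map.  It has a chain
   section embed, sending eta to omega and each cell c outside C with eta in d c
   to c + theta; the bound 2 Delta <= width(X) is what puts theta in the grading
   of such a c.  The defect 1 - embed o collapse only involves the coordinates of
   the cycle omega + J omega and of theta, where d theta = U^Delta (omega + J omega).
   Hence a cycle of X^d is determined up to boundaries by its image in X and its
   J omega-coordinate, and the latter ranges over F[U]/U^Delta, generated by
   omega + J omega in grading M(eta). *)

From HB Require Import structures.
From mathcomp Require Import all_boot all_order all_algebra.
From mathcomp Require Import zify ring lra.
Import Order.TTheory GRing.Theory Num.Theory.
Local Open Scope ring_scope.
Set Implicit Arguments. Unset Strict Implicit. Unset Printing Implicit Defensive.

Lemma pchar_F2 : 2 \in [pchar F]. Proof. exact: pchar_Fp. Qed.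

Lemma natr_F2 (n : nat) : n%:R = (odd n)%:R :> F.
Proof. by rewrite -(@Fp_nat_mod 2) // modn2. Qed.

Lemma natb_addb_F2 (a b : bool) : a%:R + b%:R = (a (+) b)%:R :> F.
Proof. by case: a; case: b; rewrite ?add0r ?addr0 ?(addrr_pchar2 pchar_F2). Qed.

Lemma natb_andb (R : pzSemiRingType) (a b : bool) : a%:R * b%:R = (a && b)%:R :> R.
Proof. by rewrite -natrM mulnb. Qed.

Lemma sum_natb_F2 (T : finType) (P : pred T) : \sum_x (P x)%:R = (odd #|P|)%:R :> F.
Proof.
rewrite -natr_F2 -sumr_const [RHS]big_mkcond /=.
by apply: eq_bigr => x _; rewrite unfold_in; case: (P x).
Qed.

Section FinTypeMatrices.
Variable R : pzSemiRingType.

Lemma sum_enum_val (T : finType) (G : T -> R) :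
  \sum_(j < #|T|) G (enum_val j) = \sum_x G x.
Proof.
rewrite (reindex (@enum_rank T)); last by apply: onW_bij; apply: enum_rank_bij.
by apply: eq_bigr => x _; rewrite enum_rankK.
Qed.

Lemma sum_ord_enum_rank (T : finType) (G : 'I_#|T| -> R) :
  \sum_(k < #|T|) G k = \sum_x G (enum_rank x).
Proof.
rewrite -(sum_enum_val (fun x => G (enum_rank x))).
by apply: eq_bigr => k _; rewrite enum_valK.
Qed.

Definition fmx (T T' : finType) (f : T -> T' -> R) : 'M[R]_(#|T|, #|T'|) :=
  \matrix_(i, j) f (enum_val i) (enum_val j).

Lemma eq_fmx (T T' : finType) (f h : T -> T' -> R) : f =2 h -> fmx f = fmx h.
Proof. by move=> E; apply/matrixP => i j; rewrite !mxE E. Qed.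

Lemma fmx1 (T : finType) : 1%:M = fmx (fun x y : T => (x == y)%:R).
Proof. by apply/matrixP => i j; rewrite !mxE (inj_eq enum_val_inj). Qed.

Lemma mul_fmx (T1 T2 T3 : finType) (f : T1 -> T2 -> R) (h : T2 -> T3 -> R) :
  fmx f *m fmx h = fmx (fun x z => \sum_y f x y * h y z).
Proof.
apply/matrixP => i k; rewrite !mxE.
rewrite -(sum_enum_val (fun y => f (enum_val i) y * h y (enum_val k))).
by apply: eq_bigr => j _; rewrite !mxE.
Qed.

Lemma mul_fmx_mx (T1 T2 : finType) n (f : T1 -> T2 -> R) (B : 'M[R]_(#|T2|, n)) i j :
  (fmx f *m B) i j = \sum_y f (enum_val i) y * B (enum_rank y) j.
Proof.
rewrite !mxE -(sum_enum_val (fun y => f (enum_val i) y * B (enum_rank y) j)).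
by apply: eq_bigr => k _; rewrite mxE enum_valK.
Qed.

Lemma mul_mx_fmx (T2 T3 : finType) n (A : 'M[R]_(n, #|T2|)) (h : T2 -> T3 -> R) i j :
  (A *m fmx h) i j = \sum_y A i (enum_rank y) * h y (enum_val j).
Proof.
rewrite !mxE -(sum_enum_val (fun y => A i (enum_rank y) * h y (enum_val j))).
by apply: eq_bigr => k _; rewrite mxE enum_valK.
Qed.

Lemma sum_eq_mull (T : finType) (a : T) (G : T -> R) :
  \sum_y (a == y)%:R * G y = G a.
Proof.
rewrite (bigD1 a) //= eqxx mul1r big1 ?addr0 // => y.
by rewrite eq_sym => /negbTE ->; rewrite mul0r.
Qed.

Lemma sum_mul_eqr (T : finType) (a : T) (G : T -> R) :
  \sum_y G y * (y == a)%:R = G a.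
Proof.
rewrite (bigD1 a) //= eqxx mulr1 big1 ?addr0 // => y /negbTE ->.
by rewrite mulr0.
Qed.

Lemma sum_eq_some_mull (T : finType) (o : option T) (G : T -> R) :
  \sum_y (o == Some y)%:R * G y = if o is Some a then G a else 0.
Proof.
case: o => [a|]; last by rewrite big1 // => y _; rewrite mul0r.
by rewrite -(sum_eq_mull a); apply: eq_bigr => y _.
Qed.

Lemma sum_eq_andb_mull (T : finType) (p : pred T) (x : T) (G : T -> R) :
  \sum_y ((x == y) && p x)%:R * G y = (p x)%:R * G x.
Proof.
rewrite -(sum_eq_mull x (fun y => (p x)%:R * G y)); apply: eq_bigr => y _.
by rewrite mulrA natb_andb andbC.
Qed.

Lemma sum_mul_eq_andbr (T : finType) (p : pred T) (z : T) (G : T -> R) :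
  \sum_y G y * ((y == z) && p y)%:R = G z * (p z)%:R.
Proof.
rewrite -(sum_mul_eqr z (fun y => G y * (p y)%:R)); apply: eq_bigr => y _.
by rewrite -mulrA natb_andb andbC.
Qed.

End FinTypeMatrices.

Section Submx.
Variable K : fieldType.

Lemma row_mx_sub_block m n1 n2 p1 p2 (x : 'M[K]_(m, n1)) (y : 'M[K]_(m, n2))
   (A : 'M[K]_(p1, n1)) (B : 'M[K]_(p2, n2)) :
  (x <= A)%MS -> (y <= B)%MS -> (row_mx x y <= block_mx A 0 0 B)%MS.
Proof.
move=> /submxP[W1 ->] /submxP[W2 ->]; apply/submxP; exists (row_mx W1 W2).
by rewrite mul_row_block !mulmx0 addr0 add0r.
Qed.

Lemma row_mx_sub_block0 m n1 n2 p1 p2 (x : 'M[K]_(m, n1)) (y : 'M[K]_(m, n2))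
   (A : 'M[K]_(p1, n1)) :
  (row_mx x y <= block_mx A 0 0 (0 : 'M[K]_(p2, n2)))%MS -> (x <= A)%MS /\ y = 0.
Proof.
move=> /submxP[W]; rewrite -[W]hsubmxK mul_row_block !mulmx0 addr0 add0r.
by move/eq_row_mx => [-> ->]; split => //; apply: submxMl.
Qed.

Lemma scalar1_const_mx a : (a <= 1)%N ->
  (1%:M : 'M[K]_a) = (const_mx 1 : 'M[K]_(a, 1)) *m (const_mx 1 : 'M[K]_(1, a)).
Proof.
move=> ha; apply/matrixP => i j; rewrite !mxE big_ord1 !mxE mulr1.
suff -> : i == j by [].
by apply/eqP/val_inj; case: a ha i j => [|[|]] // _ [[]] // ? [[]].
Qed.

Lemma submx_thin p q n (M : 'M[K]_(p, n)) (B : 'M[K]_(q, n)) :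
  n = 0%N -> (M <= B)%MS.
Proof. by move=> n0; subst n; rewrite thinmx0 sub0mx. Qed.

Lemma submx_flat p q n (M : 'M[K]_(p, n)) (B : 'M[K]_(q, n)) :
  p = 0%N -> (M <= B)%MS.
Proof. by move=> p0; subst p; rewrite flatmx0 sub0mx. Qed.

End Submx.

Lemma DmxE (Y : geom_cx) : Dmx Y = fmx (fun s t => (bd s t)%:R).
Proof. by []. Qed.

Lemma CmE (Y : geom_cx) m : Cm Y m = fmx (fun x y => ((x == y) && cbasis m x)%:R).
Proof.
apply/matrixP => i j; rewrite !mxE (inj_eq enum_val_inj).
by case: eqP => [->|]; rewrite ?mulr1n ?mulr0n.
Qed.

Lemma CmK (Y : geom_cx) m : Cm Y m *m Cm Y m = Cm Y m.
Proof.
rewrite CmE mul_fmx; apply: eq_fmx => x z.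
by rewrite sum_eq_andb_mull natb_andb andbC -andbA andbb.
Qed.

Lemma submx_CmK (Y : geom_cx) n m (v : 'M[F]_(n, #|cell Y|)) :
  (v <= Cm Y m)%MS -> v *m Cm Y m = v.
Proof. by case/submxP => W ->; rewrite -mulmxA CmK. Qed.

Section GradedChainMaps.
Variables (Y Y' : geom_cx) (P : 'M[F]_(#|cell Y|, #|cell Y'|)).
Hypotheses (P_chain : Dmx Y *m P = P *m Dmx Y')
           (P_graded : forall m, Cm Y m *m P *m Cm Y' m = Cm Y m *m P).

Lemma graded_chain_cycles m : (gZ (HF Y) m *m P <= gZ (HF Y') m)%MS.
Proof.
rewrite /= sub_capmx; apply/andP; split.
  rewrite -(submx_CmK (capmxSl _ (kermx (Dmx Y)))) -mulmxA -P_graded mulmxA.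
  exact: (submxMl _ (Cm Y' m)).
apply/sub_kermxP; rewrite -mulmxA -P_chain mulmxA.
by have /sub_kermxP -> := capmxSr (Cm Y m) (kermx (Dmx Y)); rewrite mul0mx.
Qed.

Lemma graded_chain_boundaries m : (gB (HF Y) m *m P <= gB (HF Y') m)%MS.
Proof.
rewrite /= -mulmxA P_chain mulmxA -P_graded submxMr //.
exact: (submxMl _ (Cm Y' (m + 1))).
Qed.

End GradedChainMaps.

Section Doubling.
Variables (X : geom_cx) (J : cell X -> cell X) (eta : cell X)
    (inC : pred (cell X)) (Delta : nat).
Hypotheses (HG : is_geom X) (HS : is_split J eta) (HC : is_splitting J eta inC).
Implicit Types (c : cell X).

Lemma JK : involutive J. Proof. by case: HS. Qed.
Lemma bdJJ c c' : bd (J c) (J c') = bd c c'. Proof. by case: HS. Qed.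
Lemma J_eta : J eta = eta. Proof. by case: HS => _ _ _ _ h; apply/eqP; rewrite h. Qed.
Lemma bdJ_eta c : bd (J c) eta = bd c eta. Proof. by rewrite -{1}J_eta bdJJ. Qed.
Lemma bd_etaJ c : bd eta (J c) = bd eta c. Proof. by rewrite -{1}J_eta bdJJ. Qed.
Lemma J_neq_eta c : c != eta -> J c != eta.
Proof. by apply: contra => /eqP h; rewrite -[c]JK h J_eta. Qed.

Lemma inC_neq_eta c : inC c -> c != eta. Proof. by case: HC => h _; apply: h. Qed.
Lemma inC_eta : inC eta = false. Proof. by apply/negP => /inC_neq_eta; rewrite eqxx. Qed.
Lemma inCJ c : c != eta -> inC (J c) = ~~ inC c. Proof. by case: HC => _ h; apply: h. Qed.

Lemma bd_dim c c' : bd c c' -> cdim c' = cdim c - 1.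
Proof. by case: HG => h _ _ _; apply: h. Qed.
Lemma bd_bd_even c c'' : ~~ odd #|[set c' | bd c c' && bd c' c'']|.
Proof. by case: HG => _ h _ _; apply: h. Qed.
Lemma bd_eta_eta : bd eta eta = false. Proof. by apply/negP => /bd_dim; lia. Qed.
Lemma bd_eta_skip c c' : bd c eta -> bd c c' -> ~~ bd c' eta.
Proof. by move=> /bd_dim h1 /bd_dim h2; apply/negP => /bd_dim; lia. Qed.
Lemma bd_eta_noloop c : bd eta c -> ~~ bd c eta.
Proof. by move=> /bd_dim h; apply/negP => /bd_dim; lia. Qed.

Lemma ab_coef_bd x y : y != eta -> ab_coef J inC x y = bd x y.
Proof.
move=> hy; rewrite /ab_coef /da /db.
case: ifP => Cy; first by rewrite Cy /=; case: (bd x y); case: (bd x (J y)).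
by rewrite inCJ // Cy JK.
Qed.

Local Notation Xd := (dbl_cx J eta inC Delta).
Local Notation dC := (cell Xd).
Local Notation dd := (dbd J inC).

(* [omega false] is omega and [omega true] is J omega. *)
Definition omega (b : bool) : dC := inr (inl b).
Definition theta : dC := inr (inr tt).

Variant dcell_spec : dC -> Type :=
  | DOld x : dcell_spec (inl x)
  | DOmega b : dcell_spec (omega b)
  | DTheta : dcell_spec theta.

Lemma dcellP t : dcell_spec t. Proof. by case: t => [x|[b|[]]]; constructor. Qed.

Lemma omega_eq b b' : (omega b == omega b') = (b == b'). Proof. by case: b; case: b'. Qed.
Lemma theta_omega b : (theta == omega b) = false. Proof. by []. Qed.
Lemma omega_theta b : (omega b == theta) = false. Proof. by []. Qed.
Lemma old_omega x b : (inl x == omega b) = false. Proof. by []. Qed.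
Lemma old_theta x : (inl x == theta) = false. Proof. by []. Qed.

Lemma dbd_old (x y : {c | c != eta}) : dd (inl x) (inl y) = bd (val x) (val y).
Proof.
rewrite /dbd /=; case: ifP => _ /=; rewrite ab_coef_bd ?bdJJ //.
  by case: y.
by apply: J_neq_eta; case: y.
Qed.

Lemma dbd_old_omega (x : {c | c != eta}) b :
  dd (inl x) (omega b) = bd (val x) eta && (b == ~~ inC (val x)).
Proof.
rewrite /dbd /=; case: ifP => _ /=; case: b => //=; rewrite ?andbT ?andbF //.
by rewrite bdJ_eta.
Qed.

Lemma dbd_old_theta (x : {c | c != eta}) :
  dd (inl x) theta =
  ~~ bd (val x) eta && eta_in_db J eta inC (if inC (val x) then val x else J (val x)).
Proof. by rewrite /dbd /=; case: ifP => _ //=; rewrite bdJ_eta. Qed.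

Lemma dbd_omega_old b (y : {c | c != eta}) : dd (omega b) (inl y) = bd eta (val y).
Proof.
case: y => y hy; rewrite /dbd /omega /=.
by case: b => /=; rewrite /zeta ?(inCJ hy) ?JK; case: (inC y); rewrite /= ?bd_etaJ.
Qed.

Lemma dbd_omega_omega b b' : dd (omega b) (omega b') = false. Proof. by case: b. Qed.
Lemma dbd_omega_theta b : dd (omega b) theta = false. Proof. by case: b. Qed.
Lemma dbd_theta_old y : dd theta (inl y) = false. Proof. by []. Qed.
Lemma dbd_theta_omega b : dd theta (omega b) = true. Proof. by []. Qed.
Lemma dbd_theta_theta : dd theta theta = false. Proof. by []. Qed.

Lemma dbd_omega_sym t : dd (omega false) t = dd (omega true) t.
Proof.
case: t / dcellP => [y|b|]; first by rewrite !dbd_omega_old.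
  by rewrite !dbd_omega_omega.
by rewrite !dbd_omega_theta.
Qed.

Lemma sum_dcell (G : dC -> F) :
  \sum_(t : dC) G t =
  \sum_(y : {c | c != eta}) G (inl y) + (G (omega false) + G (omega true) + G theta).
Proof.
rewrite big_sumType /=; congr (_ + _).
rewrite big_sumType /= big_bool /= [G (omega true) + _]addrC; congr (_ + _).
by rewrite (big_pred1 tt) // => -[].
Qed.

Lemma sum_old_eq c (hc : c != eta) (G : {c | c != eta} -> F) :
  \sum_y G y * (val y == c)%:R = G (exist _ c hc).
Proof.
by rewrite -(sum_mul_eqr (exist _ c hc)); apply: eq_bigr => y _; rewrite -val_eqE.
Qed.

Lemma sum_old_eq_eta (G : {c | c != eta} -> F) :
  \sum_y G y * (val y == eta)%:R = 0.
Proof. by rewrite big1 // => -[y hy] _ /=; rewrite (negbTE hy) mulr0. Qed.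

Lemma Dmx_double : Dmx Xd = fmx (fun s t => (dd s t)%:R).
Proof. by []. Qed.

Definition collapse_cell (t : dC) : option (cell X) :=
  match t with inl y => Some (val y) | inr (inl _) => Some eta | inr (inr _) => None end.

Definition collapse : 'M[F]_(#|dC|, #|cell X|) :=
  fmx (fun t c => (collapse_cell t == Some c)%:R).

Lemma collapse_chain : Dmx Xd *m collapse = collapse *m Dmx X.
Proof.
rewrite /collapse Dmx_double DmxE !mul_fmx; apply: eq_fmx => t c.
rewrite sum_eq_some_mull sum_dcell /= mulr0 addr0.
under eq_bigr do rewrite [Some _ == _]/=.
have [->|hc] := eqVneq c eta.
  rewrite sum_old_eq_eta add0r eqxx !mulr1.
  case: t / dcellP => [x|b|].
  - by rewrite !dbd_old_omega natb_addb_F2 /=; case: (bd _ _); case: (inC _).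
  - by rewrite !dbd_omega_omega /= bd_eta_eta addr0.
  - by rewrite /= (addrr_pchar2 pchar_F2).
rewrite (sum_old_eq hc) -[Some eta == Some c]/(eta == c) eq_sym (negbTE hc).
rewrite !mulr0 !addr0.
by case: t / dcellP => [x|b|]; rewrite ?dbd_old ?dbd_omega_old.
Qed.

Definition embed_coef c (t : dC) : bool :=
  match t with
  | inl y => val y == c
  | inr (inl b) => ~~ b && (c == eta)
  | inr (inr _) => ~~ inC c && (c != eta) && bd c eta
  end.

Definition embed : 'M[F]_(#|cell X|, #|dC|) := fmx (fun c t => (embed_coef c t)%:R).

(* For c outside C, d^2 (J c) = 0 at eta turns the count defining eta_in_db
   into the count of the cells of d c outside C whose boundary contains eta. *)
Lemma dbd_old_theta_embed c : c != eta ->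
  (~~ bd c eta && eta_in_db J eta inC (if inC c then c else J c))%:R =
  \sum_c' (bd c c')%:R * (embed_coef c' theta)%:R :> F.
Proof.
move=> hc; under eq_bigr do rewrite natb_andb.
case hce: (bd c eta) => /=.
  rewrite big1 // => c' _.
  have := @bd_eta_skip c c' hce; case: (bd c c') => //= /(_ isT) /negbTE ->.
  by rewrite andbF.
rewrite /eta_in_db cardsE -sum_natb_F2 /db.
case Cc: (inC c).
  rewrite (reindex_inj (can_inj JK)) /=.
  apply: eq_bigr => y _; rewrite JK bdJ_eta.
  have [->|hy] := eqVneq y eta; first by rewrite J_eta inC_eta !andbF.
  by rewrite inCJ // andbT; case: (bd c y); case: (inC y).
apply/eqP; rewrite -subr_eq0 (oppr_pchar2 pchar_F2) -big_split /=; apply/eqP.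
transitivity (\sum_x (bd c x && bd x eta)%:R : F).
  apply: eq_bigr => y _; rewrite natb_addb_F2 bdJJ; congr (_%:R).
  have [->|hy] := eqVneq y eta; first by rewrite bd_eta_eta !andbF.
  by case: (inC y); case: (bd c y); case: (bd y eta).
by rewrite sum_natb_F2 -cardsE (negbTE (bd_bd_even c eta)).
Qed.

(* Keeps [/=] from unfolding the boundary of the double. *)
Local Opaque dbd.

Lemma embed_chain : Dmx X *m embed = embed *m Dmx Xd.
Proof.
rewrite Dmx_double DmxE /embed !mul_fmx; apply: eq_fmx => c t.
rewrite [RHS]sum_dcell [embed_coef c (omega _)]/= [embed_coef c theta]/=.
under [Z in _ = Z + _]eq_bigr do rewrite mulrC [embed_coef _ _]/=.
have [->|hc] := eqVneq c eta.
  rewrite sum_old_eq_eta add0r inC_eta /= !mul0r !mul1r !addr0.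
  case: t / dcellP => [y|b|].
  - rewrite dbd_omega_old -(sum_eq_mull (val y) (fun c' => (bd eta c')%:R)).
    by apply: eq_bigr => c' _; rewrite /= mulrC.
  - rewrite dbd_omega_omega big1 // => c' _ /=.
    by case: eqP => [->|]; rewrite ?bd_eta_eta ?andbF ?mulr0 ?mul0r.
  - rewrite dbd_omega_theta big1 // => c' _ /=.
    case h1: (bd eta c'); rewrite ?mul0r //.
    by rewrite (negbTE (bd_eta_noloop h1)) andbF mulr0.
rewrite (sum_old_eq hc) andbT !mul0r !add0r.
case: t / dcellP => [y|b|].
- rewrite dbd_old dbd_theta_old mulr0 addr0.
  rewrite -(sum_eq_mull (val y) (fun c' => (bd c c')%:R)).
  by apply: eq_bigr => c' _; rewrite /= mulrC.
- rewrite dbd_old_omega dbd_theta_omega mulr1.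
  transitivity (\sum_y (bd c y)%:R * (~~ b)%:R * (y == eta)%:R : F).
    by apply: eq_bigr => y _; rewrite -mulrA !natb_andb.
  rewrite (sum_mul_eqr eta (fun y => (bd c y)%:R * (~~ b)%:R)) natb_andb natb_addb_F2.
  by case: b; case: (inC c); case: (bd c eta).
- by rewrite dbd_old_theta dbd_theta_theta mulr0 addr0 /= (dbd_old_theta_embed hc).
Qed.

Lemma embed_collapse : embed *m collapse = 1%:M.
Proof.
rewrite /embed /collapse mul_fmx fmx1; apply: eq_fmx => c c'.
rewrite sum_dcell /= mul0r mulr0 !addr0.
under eq_bigr do rewrite mulrC.
have [->|hc] := eqVneq c eta; first by rewrite sum_old_eq_eta add0r mul1r.
by rewrite (sum_old_eq hc) mul0r addr0.
Qed.

Definition coef_Jomega (a : nat) : 'M[F]_(#|dC|, a) :=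
  \matrix_(i, j) (enum_val i == omega true)%:R.

Definition omega_sum : 'M[F]_(1, #|dC|) :=
  \matrix_(i, j) ((enum_val j == omega false)%:R + (enum_val j == omega true)%:R).

Definition theta_row : 'M[F]_(1, #|dC|) := \matrix_(i, j) (enum_val j == theta)%:R.

Definition theta_coef_cell (t : dC) : bool :=
  match t with
  | inl y => ~~ inC (val y) && bd (val y) eta
  | inr (inl _) => false
  | inr (inr _) => true
  end.

Definition theta_coef : 'M[F]_(#|dC|, 1) := \matrix_(i, j) (theta_coef_cell (enum_val i))%:R.

Lemma coef_Jomega_col n (v : 'M[F]_(n, #|dC|)) a (i : 'I_n) (j : 'I_a) :
  (v *m coef_Jomega a) i j = (v *m coef_Jomega 1) i 0.
Proof. by rewrite !mxE; apply: eq_bigr => k _; rewrite !mxE. Qed.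

Lemma embed_coef_Jomega a : embed *m coef_Jomega a = 0.
Proof.
apply/matrixP => i j; rewrite /embed mul_fmx_mx mxE sum_dcell big1 ?add0r.
  by rewrite !mxE !enum_rankK /= !mulr0 mul0r !addr0.
by move=> y _; rewrite mxE enum_rankK mulr0.
Qed.

Lemma omega_sum_collapse : omega_sum *m collapse = 0.
Proof.
apply/matrixP => i c; rewrite /collapse mul_mx_fmx mxE sum_dcell big1 ?add0r.
  rewrite !mxE !enum_rankK !omega_eq !theta_omega !eqxx /=.
  by rewrite !mulr0n !mulr1n !addr0 !add0r !mul0r !addr0 !mul1r (addrr_pchar2 pchar_F2).
by move=> y _; rewrite !mxE enum_rankK !old_omega !mulr0n addr0 mul0r.
Qed.

Lemma omega_sum_coef_Jomega a : omega_sum *m coef_Jomega a = const_mx 1.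
Proof.
apply/matrixP => i j; rewrite !mxE sum_ord_enum_rank sum_dcell big1 ?add0r.
  rewrite !mxE !enum_rankK !omega_eq !theta_omega !eqxx /=.
  by rewrite ?mulr0n ?mulr1n ?mulr0 ?mul0r ?addr0 ?add0r ?mulr1.
by move=> y _; rewrite !mxE enum_rankK !old_omega !mulr0n addr0 mul0r.
Qed.

Lemma omega_sum_cycle : omega_sum *m Dmx Xd = 0.
Proof.
apply/matrixP => i j; rewrite Dmx_double mul_mx_fmx mxE sum_dcell big1 ?add0r.
  rewrite !mxE !enum_rankK !omega_eq !theta_omega !eqxx /=.
  rewrite !mulr0n !mulr1n !addr0 !add0r !mul0r !addr0 !mul1r.
  by rewrite dbd_omega_sym (addrr_pchar2 pchar_F2).
by move=> y _; rewrite !mxE enum_rankK !old_omega !mulr0n addr0 mul0r.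
Qed.

Lemma theta_row_boundary : theta_row *m Dmx Xd = omega_sum.
Proof.
apply/matrixP => i j; rewrite Dmx_double mul_mx_fmx mxE sum_dcell big1 ?add0r.
  rewrite !mxE !enum_rankK !omega_theta eqxx !mulr0n !mul0r !add0r mulr1n mul1r.
  case: (enum_val j) / dcellP => [y|b|].
  - by rewrite dbd_theta_old !old_omega mulr0n addr0.
  - by rewrite dbd_theta_omega !omega_eq; case: b; rewrite /= ?mulr0n ?mulr1n ?addr0 ?add0r.
  - by rewrite dbd_theta_theta !theta_omega mulr0n addr0.
by move=> y _; rewrite !mxE enum_rankK old_theta mulr0n mul0r.
Qed.

Lemma collapse_embed_defect :
  1%:M - collapse *m embed = coef_Jomega 1 *m omega_sum + theta_coef *m theta_row.
Proof.
rewrite /collapse /embed mul_fmx; apply/matrixP => i j.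
rewrite !mxE !big_ord1 !mxE sum_eq_some_mull -[i == j](inj_eq enum_val_inj).
move: (enum_val i) (enum_val j) => t t'; rewrite (oppr_pchar2 pchar_F2).
case: t / dcellP => [x|[]|]; case: t' / dcellP => [y|[]|] /=;
  rewrite ?mulr0 ?mul0r ?addr0 ?add0r ?mul1r ?mulr1 ?eqxx ?andbF ?(addrr_pchar2 pchar_F2) //.
all: try by case: x => x' /= /negbTE ->.
all: try by case: y => y' /= /negbTE ->.
- have -> : (inl x == inl y :> dC) = (x == y) by apply/eqP/eqP => [[]|->].
  by rewrite natb_addb_F2 -val_eqE eq_sym addbb.
- by case: x => x' /= ->; rewrite andbT.
Qed.

Hypothesis HW : le_width (2 * Delta%:R) X.

Local Notation g := (maslov eta).
Local Notation inT m := [exists k : 'I_Delta, m == g - 2 * (nat_of_ord k)%:R].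

Lemma inTP m : reflect (exists2 k : nat, (k < Delta)%N & m = g - 2 * k%:R) (inT m).
Proof.
apply: (iffP existsP) => [[k /eqP ->]|[k hk ->]]; first by exists k.
by exists (Ordinal hk).
Qed.

Lemma maslov_omega b : @maslov Xd (omega b) = g. Proof. by []. Qed.
Lemma maslov_theta : @maslov Xd theta = g - 2 * Delta%:R + 1.
Proof. by rewrite /maslov /= intrD; ring. Qed.

Lemma cgr_coset c c' : exists z : int, cgr c - cgr c' = 2 * z%:~R.
Proof.
case: HG => _ _ [q0 h] _; case: (h c) => z1 ->; case: (h c') => z2 ->.
by exists (z1 - z2); rewrite intrB; ring.
Qed.

Lemma cdim_bd_eta c : bd c eta -> (cdim c)%:~R = (cdim eta)%:~R + 1 :> rat.
Proof. by move/bd_dim => ->; rewrite intrB; ring. Qed.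

(* (M theta - M c) / 2 = (gr eta - gr c) / 2 - Delta, which is a natural number
   as eta appears in d c and 2 Delta <= width. *)
Lemma cbasis_theta_bd_eta c m : bd c eta -> cbasis m c -> @cbasis Xd m theta.
Proof.
move=> hb; rewrite /cbasis maslov_theta => hc.
have [z hz] := cgr_coset eta c.
have -> : (g - 2 * Delta%:R + 1 - m) / 2 = (maslov c - m) / 2 + (z%:~R - Delta%:R).
  rewrite /maslov (cdim_bd_eta hb).
  have -> : z%:~R = (cgr eta - cgr c) / 2 by rewrite hz; field.
  by field.
rewrite rpredD // natrEint rpredB ?intr_int ?rpred_nat //=.
by move: (HW hb); rewrite hz; lra.
Qed.

Lemma cbasis_theta_inT m : inT m -> ~~ @cbasis Xd (m + 1) theta.
Proof.
case/inTP => k hk ->; rewrite /cbasis maslov_theta.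
have -> : (g - 2 * Delta%:R + 1 - (g - 2 * k%:R + 1)) / 2 = k%:R - Delta%:R by field.
by apply/negP => /natr_ge0; rewrite subr_ge0 ler_nat; lia.
Qed.

Lemma cbasis_bd_eta_inT m c : inT m -> bd c eta -> ~~ cbasis (m + 1) c.
Proof.
case/inTP => k hk -> hb; rewrite /cbasis.
apply/negP => /natr_ge0; rewrite /maslov (cdim_bd_eta hb).
have : (k%:R : rat) < Delta%:R by rewrite ltr_nat.
by move: (HW hb); rewrite /maslov; lra.
Qed.

Lemma cbasis_theta_notinT m b : @cbasis Xd m (omega b) -> ~~ inT m -> @cbasis Xd (m + 1) theta.
Proof.
rewrite /cbasis maslov_omega maslov_theta => /natrP[n hn] hm.
have {}hn : m = g - 2 * n%:R by rewrite -hn; field.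
have leDn : (Delta <= n)%N.
  by rewrite leqNgt; apply: contra hm => lt_n; apply/inTP; exists n.
have -> : (g - 2 * Delta%:R + 1 - (m + 1)) / 2 = (n - Delta)%N%:R.
  by rewrite natrB // hn; field.
exact: rpred_nat.
Qed.

Lemma cbasis_omega_inT m b : inT m -> @cbasis Xd m (omega b).
Proof.
case/inTP => k hk ->; rewrite /cbasis maslov_omega.
have -> : (g - (g - 2 * k%:R)) / 2 = k%:R by field.
exact: rpred_nat.
Qed.

Lemma cbasis_omega_top m b : inT (m - 2) -> ~~ inT m -> ~~ @cbasis Xd m (omega b).
Proof.
case/inTP => k hk hm; apply: contra => /natrP[n hn]; rewrite maslov_omega in hn.
apply/inTP; exists n; last by rewrite -hn; field.
have : (k%:R : rat) = n.+1%:R by rewrite -addn1 natrD -hn; move: hm; lra.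
by move/eqP; rewrite eqr_nat => /eqP; lia.
Qed.

Lemma collapse_graded m : Cm Xd m *m collapse = collapse *m Cm X m.
Proof.
rewrite !CmE /collapse !mul_fmx; apply: eq_fmx => t c.
rewrite sum_eq_some_mull sum_eq_andb_mull.
by case: t / dcellP => [x|b|] /=; rewrite ?mulr0 // natb_andb andbC.
Qed.

Lemma embed_graded m : Cm X m *m embed *m Cm Xd m = Cm X m *m embed.
Proof.
rewrite !CmE /embed !mul_fmx; apply: eq_fmx => c t.
under eq_bigr do rewrite sum_eq_andb_mull.
rewrite sum_mul_eq_andbr sum_eq_andb_mull -mulrA !natb_andb; congr (_%:R).
case: t / dcellP => [y|b|] /=.
- rewrite -[@cbasis Xd m (inl y)]/(cbasis m (val y)).
  by case: eqP => [<-|]; rewrite ?andbF // andbT andbb.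
- rewrite -[@cbasis Xd m (omega b)]/(cbasis m eta).
  by case: eqP => [->|]; rewrite ?andbF //; case: (cbasis m eta); case: b.
- case hb: (bd c eta); rewrite ?andbF //.
  by case hc: (cbasis m c); rewrite //= (cbasis_theta_bd_eta hb hc) !andbT.
Qed.

Lemma coef_Jomega_boundary m a : inT m -> Cm Xd (m + 1) *m Dmx Xd *m coef_Jomega a = 0.
Proof.
move=> hm; rewrite CmE Dmx_double mul_fmx; apply/matrixP => i j.
rewrite mul_fmx_mx mxE.
under eq_bigr do rewrite mxE enum_rankK.
rewrite (sum_mul_eqr (omega true)) sum_eq_andb_mull natb_andb.
case: (enum_val i) / dcellP => [x|b|].
- rewrite dbd_old_omega /=; case hb: (bd (val x) eta); last by rewrite andbF.
  by rewrite -[@cbasis Xd _ (inl x)]/(cbasis _ (val x)) (negbTE (cbasis_bd_eta_inT hm hb)).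
- by rewrite dbd_omega_omega andbF.
- by rewrite (negbTE (cbasis_theta_inT hm)).
Qed.

Lemma omega_sum_graded m b : @cbasis Xd m (omega b) -> omega_sum *m Cm Xd m = omega_sum.
Proof.
move=> hc; rewrite CmE; apply/matrixP => i j.
rewrite mul_mx_fmx (sum_mul_eq_andbr (fun t => @cbasis Xd m t) (enum_val j)).
rewrite [in RHS]mxE -[in RHS](enum_valK j) !mxE enum_rankK.
case: (enum_val j) / dcellP => [y|b'|].
- by rewrite !old_omega mulr0n add0r mul0r.
- by rewrite -[@cbasis Xd m (omega b')]/(@cbasis Xd m (omega b)) hc mulr1.
- by rewrite !theta_omega mulr0n add0r mul0r.
Qed.

Lemma theta_row_graded m : @cbasis Xd m theta -> theta_row *m Cm Xd m = theta_row.
Proof.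
move=> hc; rewrite CmE; apply/matrixP => i j.
rewrite mul_mx_fmx (sum_mul_eq_andbr (fun t => @cbasis Xd m t) (enum_val j)).
rewrite [in RHS]mxE -[in RHS](enum_valK j) !mxE enum_rankK.
case: (enum_val j) / dcellP => [y|b|].
- by rewrite !old_theta mulr0n mul0r.
- by rewrite omega_theta mulr0n mul0r.
- by rewrite hc mulr1.
Qed.

Lemma Cm_coef_Jomega m a : ~~ @cbasis Xd m (omega true) -> Cm Xd m *m coef_Jomega a = 0.
Proof.
move=> hc; rewrite CmE; apply/matrixP => i j.
rewrite mul_fmx_mx mxE.
under eq_bigr do rewrite mxE enum_rankK.
rewrite (sum_mul_eqr (omega true)).
by case: eqP => [->|]; rewrite ?(negbTE hc) /= ?andbF.
Qed.

Lemma omega_sum_eq0 (a : 'M[F]_1) : a *m omega_sum = 0 -> a = 0.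
Proof.
move/matrixP => /(_ 0 (enum_rank (omega false))); rewrite !mxE big_ord1 !mxE enum_rankK.
rewrite !omega_eq eqxx /= addr0 mulr1 => a0.
by apply/matrixP => i j; rewrite !ord1 a0 mxE.
Qed.

Lemma omega_sum_cycle_inT m : inT m -> (omega_sum <= gZ (HF Xd) m)%MS.
Proof.
move=> hm; rewrite /= sub_capmx -(omega_sum_graded (cbasis_omega_inT false hm)) submxMl.
by apply/sub_kermxP; rewrite (omega_sum_graded (cbasis_omega_inT false hm)) omega_sum_cycle.
Qed.

Lemma omega_sum_boundary_notinT m b :
  @cbasis Xd m (omega b) -> ~~ inT m -> (omega_sum <= gB (HF Xd) m)%MS.
Proof.
move=> hc hm; rewrite /= -theta_row_boundary.
by rewrite -(theta_row_graded (cbasis_theta_notinT hc hm)) submxMr // submxMl.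
Qed.

Lemma cycle_homologous_omega_sum m (v : 'rV[F]_#|dC|) :
  (v <= gZ (HF Xd) m)%MS -> (v *m collapse <= gB (HF X) m)%MS ->
  (v - (v *m coef_Jomega 1) *m omega_sum <= gB (HF Xd) m)%MS.
Proof.
rewrite /= sub_capmx => /andP[vC /sub_kermxP vK] /submxP[w vP].
set u := w *m Cm X (m + 1) *m embed.
have uD : u *m Dmx Xd = v *m collapse *m embed.
  by rewrite /u -!mulmxA -embed_chain !mulmxA vP mulmxA.
have v_dec : v = (v *m coef_Jomega 1) *m omega_sum + (v *m theta_coef) *m theta_row
                 + u *m Dmx Xd.
  by rewrite uD -!mulmxA -mulmxDr -collapse_embed_defect mulmxBr mulmx1 mulmxA subrK.
have vPSD : v *m collapse *m embed *m Dmx Xd = 0.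
  by rewrite -mulmxA -embed_chain mulmxA -(mulmxA v) -collapse_chain mulmxA vK !mul0mx.
have vtheta0 : v *m theta_coef = 0.
  apply: omega_sum_eq0; move: vK; rewrite {1}v_dec !mulmxDl uD vPSD addr0.
  by rewrite -!mulmxA omega_sum_cycle theta_row_boundary !mulmx0 add0r.
rewrite [X in X - _]v_dec vtheta0 mul0mx addr0 addrAC subrr add0r /u.
by rewrite -(mulmxA w) -embed_graded !mulmxA -mulmxA submxMl.
Qed.

Local Notation HT := (gsum (HF X) (Tmod g Delta)).

Definition iso_mx m : 'M[F]_(#|dC|, #|cell X| + inT m) :=
  row_mx collapse (coef_Jomega (inT m)).

Lemma collapse_graded_chain m : Cm Xd m *m collapse *m Cm X m = Cm Xd m *m collapse.
Proof. by rewrite collapse_graded -mulmxA CmK. Qed.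

Lemma iso_cycles m : (gZ (HF Xd) m *m iso_mx m <= gZ HT m)%MS.
Proof.
rewrite mul_mx_row row_mx_sub_block ?submx1 //.
exact: graded_chain_cycles collapse_chain collapse_graded_chain m.
Qed.

Lemma iso_boundaries m : (gB (HF Xd) m *m iso_mx m <= gB HT m)%MS.
Proof.
rewrite mul_mx_row row_mx_sub_block //.
  exact: graded_chain_boundaries collapse_chain collapse_graded_chain m.
have [hm|hm] := orP (orbN (inT m)); first by rewrite coef_Jomega_boundary // sub0mx.
by apply: submx_thin; rewrite (negbTE hm).
Qed.

Lemma iso_injective m (v : 'rV[F]_#|dC|) : (v <= gZ (HF Xd) m)%MS ->
  (v *m iso_mx m <= gB HT m)%MS -> (v <= gB (HF Xd) m)%MS.
Proof.
move=> vZ; rewrite mul_mx_row => /row_mx_sub_block0 [vP vT].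
rewrite -[v](subrK ((v *m coef_Jomega 1) *m omega_sum)).
rewrite addmx_sub ?cycle_homologous_omega_sum //.
have vC : v *m Cm Xd m = v by apply: submx_CmK; apply: submx_trans vZ (capmxSl _ _).
have [hc|hc] := boolP (@cbasis Xd m (omega true)); last first.
  by rewrite -vC -(mulmxA v) Cm_coef_Jomega // mulmx0 mul0mx sub0mx.
have [hm|hm] := orP (orbN (inT m)); last first.
  exact: submx_trans (submxMl _ _) (omega_sum_boundary_notinT hc hm).
suff -> : v *m coef_Jomega 1 = 0 by rewrite mul0mx sub0mx.
apply/matrixP => i j; rewrite !ord1.
have j' : 'I_(inT m) by rewrite hm; exact: ord0.
by rewrite -(coef_Jomega_col v 0 j') vT !mxE.
Qed.

Lemma iso_surjective m : (gZ HT m <= gZ (HF Xd) m *m iso_mx m + gB HT m)%MS.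
Proof.
apply: submx_trans (addsmxSl _ _); rewrite /= /block_mx col_mx_sub; apply/andP; split.
  have -> : row_mx (gZ (HF X) m) 0 = (gZ (HF X) m *m embed) *m iso_mx m.
    by rewrite mul_mx_row -!mulmxA embed_collapse embed_coef_Jomega mulmx1 mulmx0.
  by apply: submxMr; apply: graded_chain_cycles embed_chain embed_graded m.
have [hm|hm] := orP (orbN (inT m)); last by apply: submx_flat; rewrite (negbTE hm).
have -> : row_mx 0 1%:M = const_mx 1 *m (omega_sum *m iso_mx m).
  rewrite mul_mx_row omega_sum_collapse omega_sum_coef_Jomega mul_mx_row mulmx0.
  by rewrite -scalar1_const_mx ?leq_b1.
by apply: submx_trans (submxMl _ _) _; apply: submxMr; apply: omega_sum_cycle_inT.
Qed.

Lemma coef_Jomega_U m (v : 'rV[F]_#|dC|) : v *m Cm Xd m = v ->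
  v *m coef_Jomega (inT (m - 2)) = v *m coef_Jomega (inT m) *m const_mx 1.
Proof.
move=> vC; apply/matrixP => i j; rewrite coef_Jomega_col [RHS]mxE.
have hm2 : inT (m - 2) by case: (inT (m - 2)) j => -[].
under eq_bigr => k _ do rewrite (coef_Jomega_col v i k) [const_mx 1 k j]mxE mulr1.
rewrite sumr_const card_ord.
have [hm|hm] := orP (orbN (inT m)); first by rewrite hm.
rewrite (negbTE hm) mulr0n -vC -mulmxA.
by rewrite (Cm_coef_Jomega _ (cbasis_omega_top true hm2 hm)) mulmx0 mxE.
Qed.

Lemma iso_U m (v : 'rV[F]_#|dC|) : (v <= gZ (HF Xd) m)%MS ->
  (v *m gU (HF Xd) m *m iso_mx (m - 2) - v *m iso_mx m *m gU HT m <= gB HT (m - 2))%MS.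
Proof.
move=> vZ; have vC : v *m Cm Xd m = v.
  by apply: submx_CmK; apply: submx_trans vZ (capmxSl _ _).
rewrite /= mulmx1 !mul_mx_row mul_row_block !mulmx1 !mulmx0 addr0 add0r.
by rewrite opp_row_mx add_row_mx subrr (coef_Jomega_U vC) subrr row_mx0 sub0mx.
Qed.

End Doubling.

Theorem lemma5p1 (X : geom_cx) (J : cell X -> cell X) (eta : cell X)
    (inC : pred (cell X)) (Delta : nat) :
  is_geom X -> is_split J eta -> is_splitting J eta inC ->
  le_width (2 * Delta%:R) X ->
  gmod_iso (HF (dbl_cx J eta inC Delta))
           (gsum (HF X) (Tmod (maslov eta) Delta)).
Proof.
move=> HG HS HC HW; exists (iso_mx J eta inC Delta) => m; split.
- exact: iso_cycles.
- exact: iso_boundaries.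
- exact: iso_injective.
- exact: iso_surjective.
- exact: iso_U.
Qed.
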